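(* Let $\mathcal H$ be finite-dimensional, $I\subseteq\mathbb R$ an open interval, and for $j=1,\dots,n$ let $\{\rho_{j,\theta}\}_{\theta\in I}$ be differentiable families of positive definite density matrices on $\mathcal H$. Let $\varrho_\theta=\rho_{1,\theta}\otimes\cdots\otimes\rho_{n,\theta}$ on $\mathfrak H=\mathcal H^{\otimes n}$ and $\Theta$ a self-adjoint operator on $\mathfrak H$, independent of $\theta$, with $\operatorname{Tr}(\varrho_\theta\Theta)=\theta$ for all $\theta\in I$. Put $\widehat{\mathbf H}(\theta)=\varrho_\theta^{-1/2}\varrho_\theta'\varrho_\theta^{-1/2}$; then $\widehat{\mathbf H}=\sum_j I^{\otimes(j-1)}\otimes\widehat H_j\otimes I^{\otimes(n-j)}$ with $\widehat H_j=\rho_{j,\theta}^{-1/2}\rho_{j,\theta}'\rho_{j,\theta}^{-1/2}$, and $$\operatorname{Tr}\bigl(\varrho_\theta(\Theta-\theta)^2\bigr)\ \ge\ \frac{1}{\widehat{\mathbf I}^{(n)}(\theta)},\qquad \widehat{\mathbf I}^{(n)}(\theta)=\operatorname{Tr}(\varrho_\theta\widehat{\mathbf H}^2)=\sum_j\operatorname{Tr}(\rho_{j,\theta}\widehat H_j^2).$$ In particular, for $n=1$, $\operatorname{Var}_\theta(\Theta)\ge1/\widehat{\mathbf I}(\theta)$ with $\widehat{\mathbf I}(\theta)=\operatorname{Tr}(\rho_\theta\widehat H^2)$, and if all $\rho_{j,\theta}=\rho_\theta$ then $\operatorname{Var}_\theta(\Theta)\ge1/(n\widehat{\mathbf I}(\theta))$.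 *)

From HB Require Import structures.
From mathcomp Require Import all_boot all_order all_algebra.
From mathcomp Require Import sesquilinear spectral.
From mathcomp Require Import complex.
From mathcomp Require Import all_classical all_reals.
From mathcomp Require Import ereal topology normedtype derive.

Set Implicit Arguments.
Unset Strict Implicit.
Unset Printing Implicit Defensive.

Import Order.TTheory GRing.Theory Num.Theory.
Import numFieldNormedType.Exports.
Local Open Scope ring_scope.
Local Open Scope complex_scope.
Local Open Scope sesquilinear_scope.

Section Defs.
Variable R : realType.
Local Notation C := R[i].

Definition psdmx (m : nat) (A : 'M[C]_m) : Prop :=
  A \is hermsymmx /\ forall v : 'rV[C]_m, 0 <= (v *m A *m (v ^t*)) 0 0.

Definition pdmx (m : nat) (A : 'M[C]_m) : Prop :=
  A \is hermsymmx /\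
  forall v : 'rV[C]_m, v != 0 -> 0 < (v *m A *m (v ^t*)) 0 0.

Definition pd_density (m : nat) (A : 'M[C]_m) : Prop :=
  pdmx A /\ \tr A = 1.

(** the positive semidefinite square root A^{1/2} (chosen classically
    among positive semidefinite S with S*S = A; 0 if there is none) *)
Definition msqrt (m : nat) (A : 'M[C]_m) : 'M[C]_m :=
  xget 0 [set S : 'M[C]_m | psdmx S /\ S *m S = A].

Definition minvsqrt (m : nat) (A : 'M[C]_m) : 'M[C]_m := msqrt (invmx A).

Definition mx_derivable (m : nat) (f : R -> 'M[C]_m) (t : R) : Prop :=
  forall i j : 'I_m,
    derivable (fun s => complex.Re (f s i j)) t 1 /\
    derivable (fun s => complex.Im (f s i j)) t 1.

Definition mx_derive (m : nat) (f : R -> 'M[C]_m) (t : R) : 'M[C]_m :=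
  \matrix_(i, j) Complex (derive1 (fun s => complex.Re (f s i j)) t)
                         (derive1 (fun s => complex.Im (f s i j)) t).

Definition Hhat (m : nat) (rho : R -> 'M[C]_m) (t : R) : 'M[C]_m :=
  minvsqrt (rho t) *m mx_derive rho t *m minvsqrt (rho t).

End Defs.

(** the tensor power H^{(x) n} of C^d : basis indexed by functions
    'I_n -> 'I_d (multi-indices), enumerated via enum_val *)
Definition tdim (d n : nat) : nat := #|{ffun 'I_n -> 'I_d}|.

Definition tensmxs (K : nzRingType) (d n : nat) (A : 'I_n -> 'M[K]_d)
  : 'M[K]_(tdim d n) :=
  \matrix_(i, k) \prod_(j < n)
     A j ((enum_val i : {ffun 'I_n -> 'I_d}) j)
         ((enum_val k : {ffun 'I_n -> 'I_d}) j).

Definition embed_at (K : nzRingType) (d n : nat) (j : 'I_n) (A : 'M[K]_d)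
  : 'M[K]_(tdim d n) :=
  tensmxs (fun k => if k == j then A else 1%:M).

From HB Require Import structures.
From mathcomp Require Import all_boot all_order all_algebra.
From mathcomp Require Import sesquilinear spectral.
From mathcomp Require Import complex.
From mathcomp Require Import all_classical all_reals.
From mathcomp Require Import ereal topology normedtype derive.
From mathcomp Require Import ring.

(* The inequality is Cauchy-Schwarz for the trace inner product
   <M, N> = Tr (M^* N).  With Q = rho^(1/2), differentiating
   Tr (rho Theta) = theta and Tr rho = 1 gives Tr (rho' (Theta - theta)) = 1,
   i.e. <H Q, Q (Theta - theta)> = 1 for H = rho^(-1/2) rho' rho^(-1/2);
   hence 1 <= Tr (rho H^2) Tr (rho (Theta - theta)^2).  For a product state
   rho^(-1/2) factors, rho' is a sum by the Leibniz rule, so H is the sum of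
   the embedded local H_j; the cross terms of Tr (rho H^2) vanish because
   Tr (rho_j H_j) = Tr rho_j' = 0, which makes the Fisher information
   additive. *)

Set Implicit Arguments.
Unset Strict Implicit.
Unset Printing Implicit Defensive.

Import Order.TTheory GRing.Theory Num.Theory.
Import numFieldNormedType.Exports.
Local Open Scope ring_scope.
Local Open Scope complex_scope.

Section TensorProduct.
Variables (K : comNzRingType) (d n : nat).
Local Notation multi_index := {ffun 'I_n -> 'I_d}.

Lemma sum_tdim (F : multi_index -> K) :
  \sum_(i < tdim d n) F (enum_val i) = \sum_f F f.
Proof.
rewrite [RHS](reindex (@enum_val multi_index (mem multi_index))) //=.
by exists enum_rank => x _; [exact: enum_valK | exact: enum_rankK].
Qed.

Lemma eq_tensmxs (A B : 'I_n -> 'M[K]_d) : A =1 B -> tensmxs A = tensmxs B.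
Proof.
by move=> eqAB; apply/matrixP => i k; rewrite !mxE; apply: eq_bigr => j _; rewrite eqAB.
Qed.

Lemma tensmxs_mul (A B : 'I_n -> 'M[K]_d) :
  tensmxs A *m tensmxs B = tensmxs (fun j => A j *m B j).
Proof.
apply/matrixP => i k; rewrite !mxE.
under eq_bigr do rewrite !mxE -big_split /=.
rewrite (sum_tdim (fun f => \prod_(j < n)
  (A j ((enum_val i : multi_index) j) (f j) * B j (f j) ((enum_val k : multi_index) j)))).
under [RHS]eq_bigr do rewrite mxE.
by rewrite bigA_distr_bigA.
Qed.

Lemma mxtrace_tensmxs (A : 'I_n -> 'M[K]_d) :
  \tr (tensmxs A) = \prod_(j < n) \tr (A j).
Proof.
rewrite /mxtrace; under eq_bigr do rewrite mxE.
by rewrite (sum_tdim (fun f => \prod_(j < n) A j (f j) (f j))) bigA_distr_bigA.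
Qed.

Lemma tensmxs1 : tensmxs (fun _ : 'I_n => 1%:M : 'M[K]_d) = 1%:M.
Proof.
apply/matrixP => i k; rewrite !mxE.
have [->|neq_ik] := eqVneq i k.
  by rewrite mulr1n; apply: big1 => j _; rewrite mxE eqxx.
have : (enum_val i : multi_index) != enum_val k.
  by apply: contra neq_ik => /eqP /(can_inj enum_valK) ->.
case/eqP/ffunP/boolp.existsNP => j /eqP neq_j.
by rewrite mulr0n (bigD1 j) //= mxE (negbTE neq_j) mulr0n mul0r.
Qed.

Lemma mxtrace_tensmxs_embed_sqr (rho H : 'I_n -> 'M[K]_d) :
  (forall j, \tr (rho j) = 1) -> (forall j, \tr (rho j *m H j) = 0) ->
  \tr (tensmxs rho *m (\sum_(j < n) embed_at j (H j)) ^+ 2) =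
  \sum_(j < n) \tr (rho j *m H j ^+ 2).
Proof.
move=> tr_rho tr_rhoH.
have tr_embed j k : \tr (tensmxs rho *m (embed_at j (H j) *m embed_at k (H k))) =
    \prod_(l < n) \tr (rho l *m (if l == j then H j else 1%:M)
                             *m (if l == k then H k else 1%:M)).
  by rewrite mulmxA !tensmxs_mul mxtrace_tensmxs.
rewrite expr2 -mulmxE mulmx_suml mulmx_sumr linear_sum /=.
apply: eq_bigr => j _; rewrite mulmx_sumr mulmx_sumr linear_sum /=.
rewrite (bigD1 j) //= big1 ?addr0 => [|k neq_kj].
  rewrite tr_embed (bigD1 j) //= eqxx big1 ?mulr1 => [|l neq_lj].
    by rewrite expr2 -mulmxE mulmxA.
  by rewrite (negbTE neq_lj) !mulmx1 tr_rho.
by rewrite tr_embed (bigD1 j) //= eqxx eq_sym (negbTE neq_kj) mulmx1 tr_rhoH mul0r.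
Qed.

End TensorProduct.

Lemma mxtrace_sub_scale (K : comNzRingType) m (A B C E : 'M[K]_m) (l : K) :
  \tr ((A - l *: B) *m (C - l *: E)) =
  \tr (A *m C) - l * \tr (A *m E) - l * \tr (B *m C) + l ^+ 2 * \tr (B *m E).
Proof.
rewrite mulmxBl !mulmxBr -!scalemxAl -!scalemxAr !linearB /= !linearZ /=.
ring.
Qed.

Local Open Scope sesquilinear_scope.

Section PositiveMatrices.
Variable R : realType.
Local Notation C := R[i].

Lemma hermsymmxP m (A : 'M[C]_m) : reflect (A^t* = A) (A \is hermsymmx).
Proof.
by apply: (iffP (is_hermitianmxP _ _ _)); rewrite expr0 scale1r => /esym.
Qed.

Lemma trmxC_mul m k p (A : 'M[C]_(m, k)) (B : 'M[C]_(k, p)) :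
  (A *m B)^t* = B^t* *m A^t*.
Proof. by rewrite trmx_mul map_mxM. Qed.

Lemma mxtrace_trmxC m (A : 'M[C]_m) : \tr (A^t*) = Num.conj (\tr A).
Proof. by rewrite /mxtrace rmorph_sum; apply: eq_bigr => i _; rewrite !mxE. Qed.

Lemma dotmx_ge0 m (w : 'rV[C]_m) : 0 <= (w *m w^t*) 0 0.
Proof.
have [->|w0] := eqVneq w 0; first by rewrite mul0mx mxE.
by rewrite -dotmxE ltW // dotmx_is_dotmx.
Qed.

Lemma dotmx_eq0 m (w : 'rV[C]_m) : (w *m w^t*) 0 0 = 0 -> w = 0.
Proof.
move=> w_w0; apply/eqP; apply: contraT => w0.
by have := dotmx_is_dotmx w0; rewrite dotmxE w_w0 ltxx.
Qed.

Lemma psd_hermitian m (A : 'M[C]_m) : psdmx A -> A^t* = A.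
Proof. by case=> /hermsymmxP. Qed.

Lemma psd_mul_self m (T : 'M[C]_m) : T^t* = T -> psdmx (T *m T).
Proof.
move=> hT; split; first by apply/hermsymmxP; rewrite trmxC_mul hT.
move=> v; rewrite (_ : v *m (T *m T) *m v^t* = (v *m T) *m (v *m T)^t*).
  exact: dotmx_ge0.
by rewrite trmxC_mul hT !mulmxA.
Qed.

Lemma pd_psd m (A : 'M[C]_m) : pdmx A -> psdmx A.
Proof.
case=> hA pA; split=> // v; have [->|v0] := eqVneq v 0.
  by rewrite !mul0mx mxE.
exact/ltW/pA.
Qed.

Lemma pd_unit m (A : 'M[C]_m) : pdmx A -> A \in unitmx.
Proof.
case=> _ pA; rewrite unitmxE unitfE; apply/negP => /det0P [v v0 vA].
by have := pA v v0; rewrite vA mul0mx mxE ltxx.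
Qed.

Lemma trmxC_invmx m (A : 'M[C]_m) : (invmx A)^t* = invmx (A^t*).
Proof. by rewrite trmx_inv map_invmx. Qed.

Lemma psd_invmx m (A : 'M[C]_m) : psdmx A -> A \in unitmx -> psdmx (invmx A).
Proof.
move=> pA uA; have hA := psd_hermitian pA.
split; first by apply/hermsymmxP; rewrite trmxC_invmx hA.
move=> v; have := pA.2 (v *m invmx A).
by rewrite trmxC_mul trmxC_invmx hA !mulmxA mulmxKV.
Qed.

Lemma hermitian_spectral m (A : 'M[C]_m) : A \is hermsymmx ->
  A = (spectralmx A)^t* *m diag_mx (spectral_diag A) *m spectralmx A.
Proof.
move=> hA; rewrite -invmx_unitary ?spectral_unitarymx //.
exact/orthomx_spectralP/hermitian_normalmx.
Qed.

Lemma spectral_row_eigen m (A : 'M[C]_m) (i : 'I_m) : A \is hermsymmx ->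
  let x := (delta_mx 0 i : 'rV[C]_m) *m spectralmx A in
  [/\ x *m A = spectral_diag A 0 i *: x, x *m (spectralmx A)^t* = delta_mx 0 i
    & x != 0].
Proof.
move=> hA x; have /unitarymxP PP := spectral_unitarymx A.
have AE := hermitian_spectral hA.
have xP : x *m (spectralmx A)^t* = delta_mx 0 i by rewrite -mulmxA PP mulmx1.
split => //.
  rewrite [in LHS]AE !mulmxA xP.
  rewrite (_ : _ *m diag_mx _ = spectral_diag A 0 i *: delta_mx 0 i) ?scalemxAl //.
  apply/matrixP => a b; rewrite mul_mx_diag !mxE.
  by case: (b =P i) => [->|]; rewrite ?andbT ?andbF ?mul0r ?mulr0 // mulrC.
apply: contraTneq isT => x0; move: xP; rewrite x0 mul0mx => /matrixP /(_ 0 i).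
by rewrite !mxE !eqxx /= => /eqP; rewrite eq_sym oner_eq0.
Qed.

Lemma psd_sqrt_exists m (A : 'M[C]_m) : psdmx A -> exists S, psdmx S /\ S *m S = A.
Proof.
move=> [hA psdA]; have /unitarymxP PP := spectral_unitarymx A.
set P := spectralmx A in PP *; set dg := spectral_diag A.
have AE : A = P^t* *m diag_mx dg *m P := hermitian_spectral hA.
have dg_ge0 i : 0 <= dg 0 i.
  have [xA xP _] := spectral_row_eigen i hA.
  have := psdA ((delta_mx 0 i : 'rV[C]_m) *m P).
  rewrite xA -scalemxAl trmxC_mul mulmxA xP mxE [X in _ * X]mxE.
  rewrite (bigD1 i) //= big1 => [|k neq_ki]; rewrite !mxE ?eqxx.
    by rewrite /= mulr1n conjC1 mulr1 addr0 mulr1.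
  by rewrite /= (negbTE neq_ki) mul0r.
pose s := \row_i sqrtC (dg 0 i).
have hs : (diag_mx s)^t* = diag_mx s.
  rewrite tr_diag_mx map_diag_mx; congr diag_mx; apply/rowP => j.
  by rewrite !mxE; apply: geC0_conj; rewrite sqrtC_ge0.
exists (P^t* *m diag_mx s *m P); split; last first.
  have ss : diag_mx s *m diag_mx s = diag_mx dg.
    apply/matrixP => a b; rewrite mul_mx_diag !mxE.
    by case: (a =P b) => [->|]; rewrite ?mulr1n ?mulr0n ?mulr0 ?mul0r // -expr2 sqrtCK.
  by rewrite [RHS]AE -ss -!mulmxA (mulmxA P) PP mul1mx.
split; first by apply/hermsymmxP; rewrite !trmxC_mul trmxCK hs mulmxA.
move=> v; pose w := v *m P^t*.
rewrite (_ : v *m (P^t* *m diag_mx s *m P) *m v^t* = w *m diag_mx s *m w^t*);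
  last by rewrite trmxC_mul trmxCK !mulmxA.
rewrite mxE; apply: sumr_ge0 => k _; rewrite mul_mx_diag !mxE mulrAC.
by apply: mulr_ge0; [exact: mul_conjC_ge0 | rewrite sqrtC_ge0].
Qed.

Lemma psd_quadform_eq0 m (S : 'M[C]_m) (x : 'rV[C]_m) :
  psdmx S -> (x *m S *m x^t*) 0 0 = 0 -> x *m S = 0.
Proof.
move=> /psd_sqrt_exists [Q [psdQ <-]] xSx0.
suff xQ0 : x *m Q = 0 by rewrite mulmxA xQ0 mul0mx.
by apply: dotmx_eq0; rewrite -xSx0 trmxC_mul (psd_hermitian psdQ) !mulmxA.
Qed.

(* For a left eigenvector x of S - T with eigenvalue c,
   0 = x (S^2 - T^2) x^H = c (x S x^H + x T x^H), since S^2 - T^2 = S (S - T) + (S - T) T;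
   both quadratic forms are nonnegative, so c != 0 would force x S = x T = 0. *)
Lemma psd_sqrt_unique m (S T : 'M[C]_m) :
  psdmx S -> psdmx T -> S *m S = T *m T -> S = T.
Proof.
move=> pS pT eST; have hS := psd_hermitian pS; have hT := psd_hermitian pT.
pose D := S - T.
have hD : D^t* = D by rewrite /D linearB /= map_mxB hS hT.
have hD' : D \is hermsymmx by apply/hermsymmxP.
suff dg0 : spectral_diag D = 0.
  apply/eqP; rewrite -subr_eq0 -/D.
  rewrite (hermitian_spectral hD') dg0 (_ : diag_mx 0 = 0) ?mulmx0 ?mul0mx //.
  by apply/matrixP => a b; rewrite !mxE mul0rn.
apply/rowP => i; rewrite mxE.
have [xD _ x0] := spectral_row_eigen i hD'.
set x := _ *m spectralmx D in xD x0; set c := spectral_diag D 0 i in xD *.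
have cr : Num.conj c = c.
  by apply/CrealP; have /mxOverP := hermitian_spectral_diag_real hD'; apply.
have Dx : D *m x^t* = c *: x^t*.
  by rewrite -hD -trmxC_mul xD linearZ /= map_mxZ; congr (_ *: _); exact: cr.
have E : x *m (S *m S - T *m T) *m x^t* = c *: (x *m S *m x^t* + x *m T *m x^t*).
  rewrite (_ : S *m S - T *m T = S *m D + D *m T);
    last by rewrite /D mulmxBr mulmxBl addrA subrK.
  have E1 : x *m (S *m D) *m x^t* = c *: (x *m S *m x^t*).
    by rewrite -!mulmxA Dx !scalemxAr.
  have E2 : x *m (D *m T) *m x^t* = c *: (x *m T *m x^t*).
    by rewrite mulmxA xD -!scalemxAl.
  by rewrite mulmxDr mulmxDl E1 E2 scalerDr.
apply/eqP; apply: contraT => c0.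
move: E; rewrite eST subrr mulmx0 mul0mx => /matrixP /(_ 0 0).
rewrite [X in X = _]mxE [X in _ = X]mxE [X in _ = _ * X]mxE => /esym /eqP.
rewrite mulf_eq0 (negbTE c0) /= (paddr_eq0 (pS.2 x) (pT.2 x)).
case/andP => /eqP /(psd_quadform_eq0 pS) xS /eqP /(psd_quadform_eq0 pT) xT.
move: xD; rewrite /D mulmxBr xS xT subrr => /esym /eqP.
by rewrite scaler_eq0 (negbTE c0) (negbTE x0).
Qed.

Lemma msqrtP m (A : 'M[C]_m) : psdmx A -> psdmx (msqrt A) /\ msqrt A *m msqrt A = A.
Proof. by move=> /psd_sqrt_exists ex; apply: (xgetPex 0 ex). Qed.

Lemma msqrt_unique m (S A : 'M[C]_m) : psdmx S -> S *m S = A -> msqrt A = S.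
Proof.
move=> pS SA; apply: xget_unique; first by split.
by move=> T [pT TA]; apply: psd_sqrt_unique => //; rewrite TA.
Qed.

Lemma minvsqrtP m (A : 'M[C]_m) : psdmx A -> A \in unitmx ->
  let S := minvsqrt A in
  [/\ psdmx S, S *m S = invmx A, S \in unitmx, S *m A *m S = 1%:M
    & invmx S *m invmx S = A].
Proof.
move=> pA uA S; have [pS SS] := msqrtP (psd_invmx pA uA).
have uS : S \in unitmx.
  by have := unitmx_inv A; rewrite uA -SS unitmx_mul => /andP [].
have SSA : S *m S *m A = 1%:M by rewrite SS mulVmx.
have iSS : invmx S *m invmx S = A.
  by rewrite -[LHS]mulmx1 -SSA !mulmxA mulmxKV // mulVmx // mul1mx.
split=> //; by rewrite -iSS !mulmxA mulmxKV // mulmxV.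
Qed.

Lemma mxtrace_trmxC_mul_ge0 m (P : 'M[C]_m) : 0 <= \tr (P^t* *m P).
Proof.
apply: sumr_ge0 => i _; rewrite mxE; apply: sumr_ge0 => k _.
by rewrite !mxE mulrC mul_conjC_ge0.
Qed.

(* Expand 0 <= Tr ((N - l M)^* (N - l M)) at l = 1 / Tr (M^* M). *)
Lemma mxtrace_cauchy_schwarz m (M N : 'M[C]_m) : \tr (M^t* *m N) = 1 ->
  1 / \tr (M^t* *m M) <= \tr (N^t* *m N).
Proof.
move=> trMN; set F := \tr (M^t* *m M); set V := \tr (N^t* *m N).
have trNM : \tr (N^t* *m M) = 1.
  by rewrite -[N^t* *m M]trmxCK trmxC_mul trmxCK mxtrace_trmxC trMN rmorph1.
have F_ge0 : 0 <= F := mxtrace_trmxC_mul_ge0 M.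
have V_ge0 : 0 <= V := mxtrace_trmxC_mul_ge0 N.
have quad (l : C) : Num.conj l = l -> 0 <= V - 2 * l + l ^+ 2 * F.
  move=> lr; have E : (N - l *: M)^t* = N^t* - l *: M^t*.
    rewrite linearB /= linearZ /= map_mxB map_mxZ.
    by congr (_ - _ *: _); exact: lr.
  have := mxtrace_trmxC_mul_ge0 (N - l *: M).
  rewrite E mxtrace_sub_scale -/F -/V trMN trNM.
  by rewrite (_ : V - 2 * l + _ = V - l * 1 - l * 1 + l ^+ 2 * F) //; ring.
have [F0|Fn0] := eqVneq F 0.
  have := quad (1 + V) (geC0_conj (addr_ge0 ler01 V_ge0)).
  rewrite F0 mulr0 addr0 (_ : V - 2 * (1 + V) = - (2 + V)); last by ring.
  have V2_gt0 : 0 < 2 + V by rewrite ltr_wpDr // ltr0n.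
  by rewrite oppr_ge0 => /(lt_le_trans V2_gt0); rewrite ltxx.
have Finv_ge0 : 0 <= F^-1 by rewrite invr_ge0.
have := quad _ (geC0_conj Finv_ge0).
by rewrite (_ : _ + _ = V - 1 / F) ?subr_ge0 //; field.
Qed.

End PositiveMatrices.

Lemma tensmxs_unit_invmx (K : comUnitRingType) d n (A : 'I_n -> 'M[K]_d) :
  (forall j, A j \in unitmx) ->
  tensmxs A \in unitmx /\ invmx (tensmxs A) = tensmxs (fun j => invmx (A j)).
Proof.
move=> uA; have inv_mul : tensmxs (fun j => invmx (A j)) *m tensmxs A = 1%:M.
  by rewrite tensmxs_mul -(tensmxs1 K d n); apply: eq_tensmxs => j; rewrite mulVmx.
have [_ uT] := mulmx1_unit inv_mul; split => //.
by rewrite -[LHS]mul1mx -inv_mul mulmxK.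
Qed.

Section TensorProductHermitian.
Variables (R : realType) (d n : nat).
Local Notation C := R[i].

Lemma tensmxs_trmxC (A : 'I_n -> 'M[C]_d) :
  (tensmxs A)^t* = tensmxs (fun j => (A j)^t*).
Proof.
apply/matrixP => i k; rewrite !mxE rmorph_prod.
by apply: eq_bigr => j _; rewrite !mxE.
Qed.

Lemma tensmxs_hermitian (A : 'I_n -> 'M[C]_d) :
  (forall j, (A j)^t* = A j) -> (tensmxs A)^t* = tensmxs A.
Proof. by move=> hA; rewrite tensmxs_trmxC; apply: eq_tensmxs. Qed.

Lemma tensmxs_psd (A : 'I_n -> 'M[C]_d) :
  (forall j, psdmx (A j)) -> psdmx (tensmxs A).
Proof.
move=> pA; set S := tensmxs (fun j => msqrt (A j)).
have -> : tensmxs A = S *m S.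
  by rewrite tensmxs_mul; apply: eq_tensmxs => j; rewrite (msqrtP (pA j)).2.
apply/psd_mul_self/tensmxs_hermitian => j.
exact/psd_hermitian/(msqrtP (pA j)).1.
Qed.

Lemma minvsqrt_tensmxs (A : 'I_n -> 'M[C]_d) :
  (forall j, psdmx (A j)) -> (forall j, A j \in unitmx) ->
  minvsqrt (tensmxs A) = tensmxs (fun j => minvsqrt (A j)).
Proof.
move=> pA uA; apply: msqrt_unique.
  by apply: tensmxs_psd => j; have [] := minvsqrtP (pA j) (uA j).
rewrite tensmxs_mul (tensmxs_unit_invmx uA).2.
by apply: eq_tensmxs => j; have [_ -> _ _ _] := minvsqrtP (pA j) (uA j).
Qed.

End TensorProductHermitian.

Section ComplexDerivative.
Variable R : realType.
Local Notation C := R[i].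
Local Notation Re := complex.Re.
Local Notation Im := complex.Im.

Lemma ReDc (x y : C) : Re (x + y) = Re x + Re y. Proof. by case: x; case: y. Qed.
Lemma ImDc (x y : C) : Im (x + y) = Im x + Im y. Proof. by case: x; case: y. Qed.
Lemma ReMc (x y : C) : Re (x * y) = Re x * Re y - Im x * Im y.
Proof. by case: x; case: y. Qed.
Lemma ImMc (x y : C) : Im (x * y) = Re x * Im y + Im x * Re y.
Proof. by case: x; case: y. Qed.
Lemma ReJc (x : C) : Re (Num.conj x) = Re x. Proof. by case: x. Qed.
Lemma ImJc (x : C) : Im (Num.conj x) = - Im x. Proof. by case: x. Qed.

Lemma eq_ReIm (x y : C) : Re x = Re y -> Im x = Im y -> x = y.
Proof. by case: x; case: y => ? ? ? ? /= -> ->. Qed.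

Definition is_cderive (t : R) (g : R -> C) (dg : C) : Prop :=
  is_derive t 1 (fun s => Re (g s)) (Re dg) /\ is_derive t 1 (fun s => Im (g s)) (Im dg).

Lemma is_cderive_cst (c : C) t : is_cderive t (fun _ => c) 0.
Proof. by split; exact: is_derive_cst. Qed.

Lemma is_cderive_id t : is_cderive t (fun s => s%:C) 1.
Proof. by split; [exact: is_derive_id | exact: is_derive_cst]. Qed.

Lemma is_cderiveD g h t dg dh : is_cderive t g dg -> is_cderive t h dh ->
  is_cderive t (fun s => g s + h s) (dg + dh).
Proof.
move=> [gr gi] [hr hi]; split.
  rewrite ReDc (_ : (fun s => _) = (fun s => Re (g s)) + (fun s => Re (h s))).
    exact: is_deriveD.
  by apply: boolp.funext => s; rewrite ReDc.
rewrite ImDc (_ : (fun s => _) = (fun s => Im (g s)) + (fun s => Im (h s))).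
  exact: is_deriveD.
by apply: boolp.funext => s; rewrite ImDc.
Qed.

Lemma is_cderiveM g h t dg dh : is_cderive t g dg -> is_cderive t h dh ->
  is_cderive t (fun s => g s * h s) (dg * h t + g t * dh).
Proof.
move=> [gr gi] [hr hi]; split.
  rewrite (_ : (fun s => _) = (fun s => Re (g s)) * (fun s => Re (h s)) -
                              (fun s => Im (g s)) * (fun s => Im (h s))).
    apply: is_derive_eq (is_deriveB (is_deriveM gr hr) (is_deriveM gi hi)) _.
    by rewrite ReDc !ReMc /GRing.scale /=; ring.
  by apply: boolp.funext => s; rewrite ReMc.
rewrite (_ : (fun s => _) = (fun s => Re (g s)) * (fun s => Im (h s)) +
                            (fun s => Im (g s)) * (fun s => Re (h s))).
  apply: is_derive_eq (is_deriveD (is_deriveM gr hi) (is_deriveM gi hr)) _.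
  by rewrite ImDc !ImMc /GRing.scale /=; ring.
by apply: boolp.funext => s; rewrite ImMc.
Qed.

Lemma is_cderiveJ g t dg : is_cderive t g dg ->
  is_cderive t (fun s => Num.conj (g s)) (Num.conj dg).
Proof.
move=> [gr gi]; split.
  by rewrite ReJc (_ : (fun s => _) = (fun s => Re (g s))) //;
     apply: boolp.funext => s; rewrite ReJc.
rewrite ImJc (_ : (fun s => _) = - (fun s => Im (g s))); first exact: is_deriveN.
by apply: boolp.funext => s; rewrite ImJc.
Qed.

Lemma is_cderive_unique g t dg1 dg2 :
  is_cderive t g dg1 -> is_cderive t g dg2 -> dg1 = dg2.
Proof.
move=> [r1 i1] [r2 i2]; apply: eq_ReIm.
  by rewrite -(@derive_val _ _ _ _ _ _ _ r1) -(@derive_val _ _ _ _ _ _ _ r2).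
by rewrite -(@derive_val _ _ _ _ _ _ _ i1) -(@derive_val _ _ _ _ _ _ _ i2).
Qed.

Lemma near_eq_is_cderive g h t dg : (\forall s \near t, g s = h s) ->
  is_cderive t g dg -> is_cderive t h dg.
Proof.
move=> gh [gr gi]; split.
  by apply: near_eq_is_derive gr; apply: filterS gh => s ->.
by apply: near_eq_is_derive gi; apply: filterS gh => s ->.
Qed.

Lemma is_cderive_sum (I : Type) (r : seq I) (P : pred I) (f : I -> R -> C) df t :
  (forall k, is_cderive t (f k) (df k)) ->
  is_cderive t (fun s => \sum_(k <- r | P k) f k s) (\sum_(k <- r | P k) df k).
Proof.
move=> hf; elim: r => [|k r IH].
  rewrite big_nil (_ : (fun s => _) = fun _ => 0); first exact: is_cderive_cst.
  by apply: boolp.funext => s; rewrite big_nil.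
rewrite big_cons (_ : (fun s => _) = fun s =>
  if P k then f k s + \sum_(l <- r | P l) f l s else \sum_(l <- r | P l) f l s).
  by case: (P k) => //; exact: is_cderiveD.
by apply: boolp.funext => s; rewrite big_cons.
Qed.

Lemma is_cderive_prod (I : eqType) (r : seq I) (f : I -> R -> C) df t :
  uniq r -> (forall k, is_cderive t (f k) (df k)) ->
  is_cderive t (fun s => \prod_(k <- r) f k s)
    (\sum_(j <- r) \prod_(k <- r) (if k == j then df k else f k t)).
Proof.
move=> + hf; elim: r => [_|k r IH /= /andP [k_r uniq_r]].
  rewrite big_nil (_ : (fun s => _) = fun _ => 1); first exact: is_cderive_cst.
  by apply: boolp.funext => s; rewrite big_nil.
rewrite (_ : (fun s => _) = fun s => f k s * \prod_(l <- r) f l s); last first.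
  by apply: boolp.funext => s; rewrite big_cons.
rewrite big_cons big_cons eqxx.
have skip_k l : l \in r -> (l == k) = false.
  by move=> l_r; apply: contraNF k_r => /eqP <-.
have prod_r : \prod_(l <- r) (if l == k then df l else f l t) = \prod_(l <- r) f l t.
  rewrite big_seq_cond [RHS]big_seq_cond.
  by apply: eq_bigr => l /andP [/skip_k ->].
have sum_r : \sum_(j <- r) \prod_(l <- k :: r) (if l == j then df l else f l t) =
             f k t * \sum_(j <- r) \prod_(l <- r) (if l == j then df l else f l t).
  rewrite mulr_sumr big_seq_cond [RHS]big_seq_cond.
  by apply: eq_bigr => j /andP [j_r _]; rewrite big_cons eq_sym (skip_k j j_r).
by rewrite prod_r sum_r; exact: is_cderiveM (hf k) (IH uniq_r).
Qed.

End ComplexDerivative.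

Section MatrixDerivative.
Variable R : realType.
Local Notation C := R[i].

Definition is_mxderive m (t : R) (f : R -> 'M[C]_m) (D : 'M[C]_m) : Prop :=
  forall i j, is_cderive t (fun s => f s i j) (D i j).

Lemma mx_deriveE m t (f : R -> 'M[C]_m) D : is_mxderive t f D -> mx_derive f t = D.
Proof.
move=> fD; apply/matrixP => i j; rewrite mxE; have [fr fi] := fD i j.
by apply: eq_ReIm; rewrite /= derive1E; exact: (@derive_val _ _ _ _ _ _ _ _).
Qed.

Lemma is_mxderive_mx_derive m t (f : R -> 'M[C]_m) :
  mx_derivable f t -> is_mxderive t f (mx_derive f t).
Proof.
by move=> df i j; have [dr di] := df i j; split; rewrite mxE /= derive1E;
   exact: derivableP.
Qed.

Lemma is_mxderive_mxtrace m t (f : R -> 'M[C]_m) D (B : 'M[C]_m) g dg :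
  is_mxderive t f D -> (\forall s \near t, \tr (f s *m B) = g s) ->
  is_cderive t g dg -> \tr (D *m B) = dg.
Proof.
move=> fD fg gdg; apply: is_cderive_unique gdg; apply: near_eq_is_cderive fg _.
rewrite /mxtrace; under [fun s => _]boolp.funext do under eq_bigr do rewrite mxE.
under eq_bigr do rewrite mxE.
apply: is_cderive_sum => i; apply: is_cderive_sum => k.
by have := is_cderiveM (fD i k) (is_cderive_cst (B k i) t); rewrite mulr0 addr0.
Qed.

Lemma is_mxderive_mxtrace_cst m t (f : R -> 'M[C]_m) D (c : C) :
  is_mxderive t f D -> (\forall s \near t, \tr (f s) = c) -> \tr D = 0.
Proof.
move=> fD fc; rewrite -[D]mulmx1; apply: is_mxderive_mxtrace fD _ (is_cderive_cst c t).
by apply: filterS fc => s <-; rewrite mulmx1.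
Qed.

Lemma is_mxderive_hermitian m t (f : R -> 'M[C]_m) D : is_mxderive t f D ->
  (\forall s \near t, (f s)^t* = f s) -> D^t* = D.
Proof.
move=> fD fh; apply/matrixP => i j; rewrite !mxE.
apply: is_cderive_unique (is_cderiveJ (fD j i)) _.
apply: near_eq_is_cderive (fD i j); apply: filterS fh => s fs /=.
by rewrite -[in LHS]fs !mxE.
Qed.

Lemma is_mxderive_tensmxs d n t (rho : 'I_n -> R -> 'M[C]_d) D :
  (forall j, is_mxderive t (rho j) (D j)) ->
  is_mxderive t (fun s => tensmxs (fun j => rho j s))
    (\sum_(j < n) tensmxs (fun k => if k == j then D k else rho k t)).
Proof.
move=> rhoD x y; set ex : {ffun 'I_n -> 'I_d} := enum_val x.
set ey : {ffun 'I_n -> 'I_d} := enum_val y.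
under [fun s => _]boolp.funext do rewrite mxE -/ex -/ey.
rewrite summxE (eq_bigr (fun j => \prod_(k < n)
  (if k == j then D k (ex k) (ey k) else rho k t (ex k) (ey k)))); last first.
  by move=> j _; rewrite mxE; apply: eq_bigr => k _; case: eqP.
by apply: is_cderive_prod; [exact: index_enum_uniq | move=> k; exact: rhoD].
Qed.

Lemma near_ereal_itv (a b : \bar R) (t : R) : (a < t%:E < b)%E ->
  \forall s \near t, (a < s%:E < b)%E.
Proof.
move=> /andP [ta tb].
have ha : \forall s \near t, (a < s%:E)%E.
  move: ta; case: a => [a'| |] //= => [|_]; last by near=> s; rewrite ltNyr.
  by rewrite lte_fin => a't; near=> s; rewrite lte_fin; near: s; exact: lt_nbhsr.
have hb : \forall s \near t, (s%:E < b)%E.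
  move: tb; case: b => [b'| |] //= => [|_]; last by near=> s; rewrite ltry.
  by rewrite lte_fin => tb'; near=> s; rewrite lte_fin; near: s; exact: lt_nbhsl.
by near=> s; apply/andP; split; near: s.
Unshelve. all: by end_near.
Qed.

End MatrixDerivative.

Section CramerRao.
Variable R : realType.
Local Notation C := R[i].

Lemma mxtrace_mul_minvsqrt_conj m (A D : 'M[C]_m) : psdmx A -> A \in unitmx ->
  \tr (A *m (minvsqrt A *m D *m minvsqrt A)) = \tr D.
Proof.
move=> pA uA; have [_ _ _ SAS _] := minvsqrtP pA uA.
by rewrite !mulmxA mxtrace_mulC !mulmxA SAS mul1mx.
Qed.

Lemma cramer_rao_trace m (rho D Theta : 'M[C]_m) (x : R) :
  psdmx rho -> rho \in unitmx -> D^t* = D -> Theta^t* = Theta ->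
  \tr D = 0 -> \tr (D *m Theta) = 1 ->
  1 / \tr (rho *m (minvsqrt rho *m D *m minvsqrt rho) ^+ 2)
    <= \tr (rho *m (Theta - (x%:C)%:M) ^+ 2).
Proof.
move=> pA uA hD hTh trD trDTh.
have [pS _ uS _ QQ] := minvsqrtP pA uA.
set S := minvsqrt rho in pS uS QQ *; set H := S *m D *m S.
set X := Theta - _; pose Q := invmx S.
have hS := psd_hermitian pS.
have hQ : Q^t* = Q by rewrite /Q trmxC_invmx hS.
have hH : H^t* = H by rewrite /H !trmxC_mul hS hD mulmxA.
have QHQ : Q *m H *m Q = D by rewrite /H /Q !mulmxA mulVmx // mul1mx mulmxK.
have hX : X^t* = X.
  rewrite /X linearB /= map_mxB hTh tr_scalar_mx map_scalar_mx.
  by congr (_ - _%:M); apply/CrealP; rewrite complex_real.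
have ip1 : \tr ((H *m Q)^t* *m (Q *m X)) = 1.
  rewrite trmxC_mul hQ hH mulmxA QHQ /X mulmxBr linearB /= mul_mx_scalar linearZ /=.
  by rewrite trDTh trD mulr0 subr0.
have := mxtrace_cauchy_schwarz ip1.
have -> : \tr ((H *m Q)^t* *m (H *m Q)) = \tr (rho *m H ^+ 2).
  by rewrite trmxC_mul hQ hH !mulmxA mxtrace_mulC !mulmxA QQ.
suff -> : \tr ((Q *m X)^t* *m (Q *m X)) = \tr (rho *m X ^+ 2) by [].
transitivity (\tr (X *m (rho *m X))).
  by rewrite trmxC_mul hQ hX !mulmxA -(mulmxA X Q Q) QQ.
by rewrite mxtrace_mulC -mulmxA expr2 -mulmxE.
Qed.

Lemma Hhat_tensmxs d n (rho : 'I_n -> R -> 'M[C]_d) t :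
  (forall j, psdmx (rho j t)) -> (forall j, rho j t \in unitmx) ->
  (forall j, mx_derivable (rho j) t) ->
  Hhat (fun s => tensmxs (fun j => rho j s)) t =
  \sum_(j < n) embed_at j (Hhat (rho j) t).
Proof.
move=> pA uA dA; have dT := is_mxderive_tensmxs (fun j => is_mxderive_mx_derive (dA j)).
rewrite /Hhat (mx_deriveE dT) minvsqrt_tensmxs // mulmx_sumr mulmx_suml.
apply: eq_bigr => j _; rewrite !tensmxs_mul /embed_at; apply: eq_tensmxs => k /=.
by case: eqP => [-> //|_]; have [_ _ _ -> _] := minvsqrtP (pA k) (uA k).
Qed.

End CramerRao.

Theorem mainTheorem10 (R : realType) (d n : nat) (a b : \bar R)
    (rho : 'I_n -> R -> 'M[R[i]]_d) (Theta : 'M[R[i]]_(tdim d n)) :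
  (a < b)%E ->
  (forall (j : 'I_n) (t : R), (a < t%:E < b)%E -> pd_density (rho j t)) ->
  (forall (j : 'I_n) (t : R), (a < t%:E < b)%E -> mx_derivable (rho j) t) ->
  Theta \is hermsymmx ->
  (forall t : R, (a < t%:E < b)%E ->
     \tr (tensmxs (fun j => rho j t) *m Theta) = t%:C) ->
  forall t : R, (a < t%:E < b)%E ->
    let vrho := fun s : R => tensmxs (fun j => rho j s) in
    let HH := Hhat vrho t in
    let H := fun j : 'I_n => Hhat (rho j) t in
    let Fisher := \tr (vrho t *m HH ^+ 2) in
    [/\ HH = \sum_(j < n) embed_at j (H j),
        Fisher = \sum_(j < n) \tr (rho j t *m (H j) ^+ 2),
        1 / Fisher <= \tr (vrho t *m (Theta - (t%:C)%:M) ^+ 2)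
      & forall rho0 : R -> 'M[R[i]]_d, (forall j, rho j = rho0) ->
          1 / (n%:R * \tr (rho0 t *m (Hhat rho0 t) ^+ 2))
            <= \tr (vrho t *m (Theta - (t%:C)%:M) ^+ 2)].
Proof.
move=> _ density derivable hTheta unbiased t t_in vrho HH H Fisher.
have near_density : \forall s \near t, forall j, pd_density (rho j s).
  by apply: filterS (near_ereal_itv t_in) => s s_in j; exact: density.
have psd j := pd_psd (density j t t_in).1.
have unit j := pd_unit (density j t t_in).1.
have HHE : HH = \sum_(j < n) embed_at j (H j).
  exact: Hhat_tensmxs psd unit (fun j => derivable j t t_in).
have FisherE : Fisher = \sum_(j < n) \tr (rho j t *m (H j) ^+ 2).
  rewrite /Fisher HHE mxtrace_tensmxs_embed_sqr // => [j|j].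
    exact: (density j t t_in).2.
  rewrite mxtrace_mul_minvsqrt_conj //.
  apply: is_mxderive_mxtrace_cst (is_mxderive_mx_derive (derivable j t t_in)) _.
  by apply: filterS near_density => s ds; exact: (ds j).2.
have dv : is_mxderive t vrho (mx_derive vrho t).
  have := is_mxderive_tensmxs (fun j => is_mxderive_mx_derive (derivable j t t_in)).
  by move=> dT; rewrite (mx_deriveE dT).
have bound : 1 / Fisher <= \tr (vrho t *m (Theta - (t%:C)%:M) ^+ 2).
  apply: cramer_rao_trace; first exact: tensmxs_psd.
  - exact: (tensmxs_unit_invmx unit).1.
  - apply: is_mxderive_hermitian dv _; apply: filterS near_density => s ds.
    by apply: tensmxs_hermitian => j; exact/psd_hermitian/pd_psd/(ds j).1.
  - exact/hermsymmxP.
  - apply: is_mxderive_mxtrace_cst dv _; apply: filterS near_density => s ds.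
    by rewrite mxtrace_tensmxs big1 // => j _; exact: (ds j).2.
  - apply: is_mxderive_mxtrace dv _ (is_cderive_id t).
    by apply: filterS (near_ereal_itv t_in) => s; exact: unbiased.
split => // rho0 rho_eq.
suff <- : Fisher = n%:R * \tr (rho0 t *m (Hhat rho0 t) ^+ 2) by [].
rewrite FisherE /H; under eq_bigr do rewrite rho_eq.
by rewrite sumr_const card_ord mulr_natl.
Qed.
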